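(* Let $A$ be a finite alphabet, $E\subseteq W(A)$ and $\vec s=(s_n(x))_{n=0}^\infty\in V^\infty(A)$ such that $E$ is large in $\vec s$. Then there exist $m\ge 1$, a variable word $w(x)\in\langle (s_n(x))_{n=0}^{m-1}\rangle_v$ and $\vec t\in V^\infty(A)$ with $\vec t\le (s_{m+n}(x))_{n=0}^\infty$ such that, setting $F=\{w(a):a\in A\}$, the set $E\cap E_F$ is large in $\vec t$.
   Context: $\mathbb N=\{0,1,2,\dots\}$. Let $A$ be a finite nonempty alphabet. $W(A)$ denotes the set of all finite words over $A$, including the empty word; words are concatenated by juxtaposition. Fix a symbol $x\notin A$. A variable word over $A$ is a finite word over $A\cup\{x\}$ in which $x$ occurs at least once; $V(A)$ is the set of variable words. For $s(x)\in V(A)$ and $a\in A\cup\{x\}$, $s(a)$ is obtained by replacing every occurrence of $x$ by $a$. $V^\infty(A)$ is the set of infinite sequences of variable words. For a sequence $(s_n(x))_{n\in I}$ of variable words indexed by a set $I\subseteq\mathbb N$ that is either a finite interval or of the form $\{m,m+1,\dots\}$: the constant span $\langle (s_n(x))_{n\in I}\rangle_c$ is the set of all words $s_{l_0}(a_0)s_{l_1}(a_1)\cdots s_{l_j}(a_j)$ with $j\ge 0$, $l_0<\dots<l_j$ in $I$ and $a_0,\dots,a_j\in A$; the variable span $\langle (s_n(x))_{n\in I}\rangle_v$ is the set of all words $s_{l_0}(a_0)\cdots s_{l_j}(a_j)$ with $j\ge0$, $l_0<\dots<l_j$ in $I$, $a_0,\dots,a_j\in A\cup\{x\}$ and at least one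 $a_i=x$. Extracted subsequences: let $\vec s=(s_n(x))_{n=0}^\infty\in V^\infty(A)$. A finite sequence $(t_n(x))_{n=0}^l$ of variable words is an extracted subsequence of $\vec s$ if there exist integers $0=m_0<m_1<\dots<m_{l+1}$ with $t_i(x)\in\langle (s_n(x))_{n=m_i}^{m_{i+1}-1}\rangle_v$ for all $0\le i\le l$. An infinite sequence $\vec t=(t_n(x))_{n=0}^\infty$ is an extracted subsequence of $\vec s$ if every initial segment $(t_n(x))_{n=0}^l$ is a finite extracted subsequence of $\vec s$. We write $\vec t\le\vec s$. A set $E\subseteq W(A)$ is large in $\vec s\in V^\infty(A)$ if $E\cap\langle\vec w\rangle_c\neq\emptyset$ for every infinite extracted subsequence $\vec w$ of $\vec s$. For $E\subseteq W(A)$ and nonempty $F\subseteq W(A)$, $E_F=\{z\in W(A): wz\in E\text{ for every }w\in F\}$. *)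

From mathcomp Require Import all_boot.
Set Implicit Arguments. Unset Strict Implicit. Unset Printing Implicit Defensive.

(* Words over A: seq A.  Letters of A ∪ {x}: option A, with None = x.
   Variable words: seq (option A) containing None. *)
Definition word (A : finType) := seq A.
Definition vword (A : finType) := seq (option A).

Definition is_vword (A : finType) (s : vword A) : bool := None \in s.

Definition subst_c (A : finType) (s : vword A) (a : A) : word A :=
  map (fun c => odflt a c) s.

Definition subst_v (A : finType) (s : vword A) (a : option A) : vword A :=
  map (fun c => if c is Some b then Some b else a) s.

Definition cspan (A : finType) (s : nat -> vword A) (I : pred nat) (z : word A) : Prop :=
  exists ls : seq (nat * A),
    [/\ ls != [::], sorted ltn (map fst ls), all I (map fst ls) &
        z = flatten [seq subst_c (s p.1) p.2 | p <- ls]].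

Definition vspan (A : finType) (s : nat -> vword A) (I : pred nat) (z : vword A) : Prop :=
  exists ls : seq (nat * option A),
    [/\ ls != [::], sorted ltn (map fst ls), all I (map fst ls),
        has (fun p => p.2 == None) ls &
        z = flatten [seq subst_v (s p.1) p.2 | p <- ls]].

Definition extracted_fin (A : finType) (t : nat -> vword A) (l : nat)
    (s : nat -> vword A) : Prop :=
  exists m : nat -> nat,
    m 0 = 0 /\
    forall i, i <= l ->
      m i < m i.+1 /\ vspan s (fun n => (m i <= n) && (n < m i.+1)) (t i).

Definition extracted (A : finType) (t s : nat -> vword A) : Prop :=
  forall l, extracted_fin t l s.

Definition large (A : finType) (E : word A -> Prop) (s : nat -> vword A) : Prop :=
  forall w : nat -> vword A, extracted w s ->
    exists z, E z /\ cspan w predT z.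

(* E_F for nonempty F *)
Definition shiftset (A : finType) (E : word A -> Prop) (F : word A -> Prop) : word A -> Prop :=
  fun z => forall w, F w -> E (w ++ z).

(* The proof goes through idempotent ultrafilters on located words: finite
   sequences of letters (n, o), with o a letter of A or the variable, read in
   s as the concatenation of the s_n(o).  For located words this gives
   the Hales-Jewett theorem in ultrafilter form: an idempotent p such that each
   B in p contains all instances x(a) of a block x with a variable beyond any
   position.  A Galvin-Glazer recursion with the sets B* then produces, from
   any B in p, a block sequence L_0, L_1, ... all of whose constant
   combinations lie in B.

   Finally let B be the set of located words read into E.  If B is not in p,
   its complement yields an extracted subsequence of s whose constant span
   avoids E, contradicting largeness.  If B is in p, take w read from L_0,
   m the end of L_0 and t read from L_1, L_2, ...: a constant word z of an
   extracted subsequence of t is read from a combination of blocks beyond L_0,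
   so both z and w(a) z lie in E. *)

From mathcomp Require Import all_boot.
From mathcomp Require Import boolp classical_sets filter.
Set Implicit Arguments. Unset Strict Implicit. Unset Printing Implicit Defensive.

Section Ultrafilters.
Variable X : Type.

Record uf := UF {
  ufmem : (X -> Prop) -> Prop;
  ufmemT : ufmem (fun _ => True);
  ufmemI : forall B C, ufmem B -> ufmem C -> ufmem (fun x => B x /\ C x);
  ufmemS : forall B C : X -> Prop, (forall x, B x -> C x) -> ufmem B -> ufmem C;
  ufmemU : forall B, ufmem B \/ ufmem (fun x => ~ B x);
  ufmem0 : ~ ufmem (fun _ => False) }.

Lemma uf_ext p q : (forall B, ufmem p B <-> ufmem q B) -> p = q.
Proof.
case: p => m1 T1 I1 S1 U1 Z1; case: q => m2 T2 I2 S2 U2 Z2 /= eq_mem.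
have eq_m : m1 = m2 by apply: funext => B; apply: propext.
by subst m2; congr UF; apply: Prop_irrelevance.
Qed.

Lemma ufmem_ex p B : ufmem p B -> exists x, B x.
Proof.
move=> pB; apply: contrapT => noB; apply: (@ufmem0 p).
by apply: ufmemS pB => x Bx; apply: noB; exists x.
Qed.

Lemma ufmemNN p B : ufmem p B -> ~ ufmem p (fun x => ~ B x).
Proof.
by move=> pB pnB; apply: (@ufmem0 p); apply: ufmemS (ufmemI pB pnB) => x [].
Qed.

Lemma ufmemN p B : ~ ufmem p B -> ufmem p (fun x => ~ B x).
Proof. by case: (ufmemU p B). Qed.

Lemma uf_sub p q : (forall B, ufmem p B -> ufmem q B) -> p = q.
Proof.
move=> pq; apply: uf_ext => B; split; first exact: pq.
move=> qB; apply: contrapT => npB.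
exact: ufmemNN qB (pq _ (ufmemN npB)).
Qed.

Lemma ufmem_all (I : finType) p (B : I -> X -> Prop) :
  (forall i, ufmem p (B i)) -> ufmem p (fun x => forall i, B i x).
Proof.
move=> pB.
have pBs (s : seq I) : ufmem p (fun x => forall i, i \in s -> B i x).
  elim: s => [|i s IH]; first by apply: ufmemS (ufmemT p).
  apply: ufmemS (ufmemI (pB i) IH) => x [Bi Bs] j.
  by rewrite inE => /orP[/eqP->//|/Bs].
by apply: ufmemS (pBs (enum I)) => x Bx i; apply: Bx; rewrite mem_enum.
Qed.

Lemma uf_extend (G : (X -> Prop) -> Prop) :
  (exists B, G B) ->
  (forall B C, G B -> G C -> exists2 D, G D & forall x, D x -> B x /\ C x) ->
  (forall B, G B -> exists x, B x) ->
  exists p : uf, forall B, G B -> ufmem p B.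
Proof.
move=> [B0 GB0] Gdir Gne.
have FG : Filter (filter_from G id).
  apply: filter_from_filter; first by exists B0.
  by move=> B C GB GC; have [D GD DBC] := Gdir _ _ GB GC; exists D => // x /DBC.
have [U [Uultra GU]] := ultraFilterLemma (filter_from_proper FG Gne).
have Ufilter : Filter U by case: Uultra => -[].
have U0 : ~ U set0 by case: Uultra => -[].
have uT : U (fun _ => True) := @filterT _ _ Ufilter.
have uI B C : U B -> U C -> U (fun x => B x /\ C x) := @filterI _ _ Ufilter B C.
have uS (B C : X -> Prop) : (forall x, B x -> C x) -> U B -> U C := @filterS _ _ Ufilter B C.
have uU B : U B \/ U (fun x => ~ B x) := in_ultra_setVsetC B Uultra.
exists (UF uT uI uS uU U0) => B GB; apply: GU; by exists B.
Qed.

(* The closed sets of the Stone topology on ultrafilters: K is closed when it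
   contains every ultrafilter containing all the sets common to members of K. *)
Definition closed (K : uf -> Prop) :=
  forall p, (forall B, (forall r, K r -> ufmem r B) -> ufmem p B) -> K p.

Definition bigmeet (KK : (uf -> Prop) -> Prop) : uf -> Prop :=
  fun p => forall K, KK K -> K p.

Lemma closed_bigmeet KK : (forall K, KK K -> closed K) -> closed (bigmeet KK).
Proof.
move=> KKc p pcl K KK_K; apply: (KKc _ KK_K) => B KB; apply: pcl => r Kr.
exact: KB (Kr _ KK_K).
Qed.

Lemma closedI K1 K2 : closed K1 -> closed K2 -> closed (fun p => K1 p /\ K2 p).
Proof.
move=> cK1 cK2 p pcl; split.
- by apply: cK1 => B K1B; apply: pcl => r [/K1B].
- by apply: cK2 => B K2B; apply: pcl => r [_ /K2B].
Qed.

Lemma chain_bigmeet KK : (exists K, KK K) ->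
  (forall K, KK K -> closed K /\ exists p, K p) ->
  (forall K1 K2, KK K1 -> KK K2 ->
     (forall p, K1 p -> K2 p) \/ (forall p, K2 p -> K1 p)) ->
  exists p, bigmeet KK p.
Proof.
move=> [K0 KK0] KKc KKchain.
pose G B := exists2 K, KK K & forall r, K r -> ufmem r B.
have [p pG] : exists p : uf, forall B, G B -> ufmem p B.
  apply: uf_extend.
  - by exists (fun _ => True); exists K0 => // r _; apply: ufmemT.
  - move=> B1 B2 [K1 KK1 K1B1] [K2 KK2 K2B2].
    exists (fun x => B1 x /\ B2 x) => //.
    have [K12|K21] := KKchain _ _ KK1 KK2.
    + by exists K1 => // r K1r; apply: ufmemI; [exact: K1B1|exact/K2B2/K12].
    + by exists K2 => // r K2r; apply: ufmemI; [exact/K1B1/K21|exact: K2B2].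
  - by move=> B [K /KKc [_ [r Kr]] KB]; exact: ufmem_ex (KB _ Kr).
exists p => K KK_K; have [cK _] := KKc _ KK_K.
by apply: cK => B KB; apply: pG; exists K.
Qed.

Lemma closed_minimal (Q : (uf -> Prop) -> Prop) K0 :
  Q K0 -> (forall K, Q K -> closed K /\ exists p, K p) ->
  (forall KK, (forall K, KK K -> Q K) -> (exists K, KK K) ->
     (exists p, bigmeet KK p) -> Q (bigmeet KK)) ->
  exists M, [/\ Q M, (forall p, M p -> K0 p) &
    forall M', Q M' -> (forall p, M' p -> M p) -> forall p, M p -> M' p].
Proof.
move=> QK0 Qc Qmeet.
pose T := {K : uf -> Prop | Q K /\ forall p, K p -> K0 p}.
pose R (K1 K2 : T) := `[< forall p, sval K2 p -> sval K1 p >].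
have [| | | |M Mmax] := @Zorn T R.
- by move=> K; apply/asboolP.
- by move=> K1 K2 K3 /asboolP K21 /asboolP K32; apply/asboolP => p /K32 /K21.
- move=> [K1 HK1] [K2 HK2] /asboolP /= K21 /asboolP /= K12.
  have eqK : K1 = K2.
    by apply: funext => p; apply: propext; split; [exact: K12|exact: K21].
  by subst K2; congr exist; apply: Prop_irrelevance.
- move=> C Ctot.
  have [[K1 CK1]|noC] := pselect (exists K, C K); last first.
    exists (exist _ K0 (conj QK0 (fun p (K0p : K0 p) => K0p))) => K CK.
    by case: noC; exists K.
  pose KK K := exists2 K', C K' & sval K' = K.
  have KKQ K : KK K -> Q K by move=> [K' _ <-]; case: (svalP K').
  have KKne : exists K, KK K by exists (sval K1); exists K1.
  have [p meet_p] : exists p, bigmeet KK p.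
    apply: chain_bigmeet => // [K /KKQ /Qc //|_ _ [K1' CK1' <-] [K2' CK2' <-]].
    by have [/asboolP|/asboolP] := Ctot _ _ CK1' CK2'; [right|left].
  have meet0 q : bigmeet KK q -> K0 q.
    by move=> /(_ (sval K1) (ex_intro2 _ _ K1 CK1 erefl)); case: (svalP K1) => _; apply.
  exists (exist _ (bigmeet KK) (conj (Qmeet KK KKQ KKne (ex_intro _ p meet_p)) meet0)).
  by move=> K CK; apply/asboolP => q /= /(_ (sval K)); apply; exists K.
- exists (sval M); case: (svalP M) => QM M0; split => // M' QM' M'M q Mq.
  have M'0 p : M' p -> K0 p by move=> /M'M /M0.
  have eqM : exist (fun K => Q K /\ forall p, K p -> K0 p) M' (conj QM' M'0) = M.
    by apply: Mmax; apply/asboolP.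
  by rewrite -eqM in Mq.
Qed.
End Ultrafilters.

Section UfSemigroup.
Variables (X : Type) (op : X -> X -> X).
Hypothesis opA : associative op.
Local Notation uf := (uf X).

Definition lshift (x : X) (B : X -> Prop) : X -> Prop := fun y => B (op x y).
Definition ufshift (q : uf) (B : X -> Prop) : X -> Prop :=
  fun x => ufmem q (lshift x B).

Section Product.
Variables p q : uf.
Let m B := ufmem p (ufshift q B).
Let mT : m (fun _ => True).
Proof. by apply: ufmemS (ufmemT p) => x _; apply: ufmemT. Qed.
Let mI B C : m B -> m C -> m (fun x => B x /\ C x).
Proof. by move=> mB mC; apply: ufmemS (ufmemI mB mC) => x [qB qC]; apply: ufmemI. Qed.
Let mS (B C : X -> Prop) : (forall x, B x -> C x) -> m B -> m C.
Proof. by move=> BC; apply: ufmemS => x; apply: ufmemS => y; apply: BC. Qed.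
Let mU B : m B \/ m (fun x => ~ B x).
Proof.
have [|pnB] := ufmemU p (ufshift q B); [by left|right].
by apply: ufmemS pnB => x /ufmemN.
Qed.
Let m0 : ~ m (fun _ => False).
Proof. by move=> /ufmem_ex [x /ufmem0]. Qed.
Definition ufmul := UF mT mI mS mU m0.
End Product.

Lemma ufmemM p q B : ufmem (ufmul p q) B = ufmem p (ufshift q B).
Proof. by []. Qed.

Lemma ufmulA p q r : ufmul (ufmul p q) r = ufmul p (ufmul q r).
Proof.
apply: uf_ext => B; rewrite !ufmemM.
suff -> : ufshift q (ufshift r B) = ufshift (ufmul q r) B by [].
apply: funext => x; rewrite /ufshift ufmemM /lshift.
congr (ufmem q); apply: funext => y; congr (ufmem r); apply: funext => z.
by rewrite -opA.
Qed.

Definition rtrans (K : uf -> Prop) (x : uf) : uf -> Prop :=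
  fun u => exists2 r, K r & u = ufmul r x.

(* Right translation by x is continuous, hence maps closed (compact) sets to
   closed sets: an ultrafilter u in the closure of K x is r x for some r \in K,
   namely any ultrafilter containing all the sets D /\ {y | y^{-1}B \in x}
   with D common to K and B \in u. *)
Lemma closed_rtrans K x : closed K -> closed (rtrans K x).
Proof.
move=> cK u u_cl.
pose G C := exists B D, [/\ ufmem u B, forall r, K r -> ufmem r D &
                            C = fun y => D y /\ ufshift x B y].
have [r rG] : exists r : uf, forall C, G C -> ufmem r C.
  apply: uf_extend.
  - exists (fun y => True /\ ufshift x (fun _ => True) y).
    by exists (fun _ => True), (fun _ => True); split => // [|r _]; apply: ufmemT.
  - move=> _ _ [B1 [D1 [uB1 KD1 ->]]] [B2 [D2 [uB2 KD2 ->]]].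
    exists (fun y => (D1 y /\ D2 y) /\ ufshift x (fun z => B1 z /\ B2 z) y).
      exists (fun z => B1 z /\ B2 z), (fun y => D1 y /\ D2 y).
      split=> [|r Kr|//]; first exact: ufmemI.
      by apply: ufmemI; [apply: KD1|apply: KD2].
    by move=> y [[D1y D2y] xB]; split; split => //; apply: ufmemS xB => z [].
  - move=> _ [B [D [uB KD ->]]]; apply: contrapT => empty.
    suff : ufmem u (fun z => ~ B z) by apply: ufmemNN.
    apply: u_cl => _ [r Kr ->]; rewrite ufmemM.
    have nrB : ~ ufmem r (ufshift x B).
      by move=> rB; have [y DBy] := ufmem_ex (ufmemI (KD _ Kr) rB); apply: empty; exists y.
    by apply: ufmemS (ufmemN nrB) => y /ufmemN.
exists r.
  apply: cK => D KD.
  have GD : G (fun y => D y /\ ufshift x (fun _ => True) y).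
    by exists (fun _ => True), D; split => //; apply: ufmemT.
  by apply: ufmemS (rG _ GD) => y [].
apply: uf_sub => B uB; rewrite ufmemM.
have GB : G (fun y => True /\ ufshift x B y).
  by exists B, (fun _ => True); split => // r' _; apply: ufmemT.
by apply: ufmemS (rG _ GB) => y [].
Qed.

Definition subsemigroup (T : uf -> Prop) := forall p q, T p -> T q -> T (ufmul p q).
Definition left_ideal (T L : uf -> Prop) := forall t l, T t -> L l -> L (ufmul t l).

Lemma closed_left_unit p : closed (fun r => ufmul r p = p).
Proof.
move=> u u_cl; symmetry; apply: uf_sub => B pB.
by rewrite ufmemM; apply: u_cl => r rp; move: pB; rewrite -{1}rp ufmemM.
Qed.

Lemma ellis T : closed T -> (exists p, T p) -> subsemigroup T ->
  exists2 p, T p & ufmul p p = p.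
Proof.
move=> cT neT sT.
pose Q K := [/\ closed K, (exists p, K p), subsemigroup K & forall p, K p -> T p].
have [|K [cK neK _ _]|KK KKQ [K0 KK0] nemeet|M [[cM [p Mp] sM MT] _ Mmin]]
  := @closed_minimal _ Q T.
- by split.
- by split.
- split => //; first by apply: closed_bigmeet => K /KKQ [].
  + move=> a b Ma Mb K KK_K; have [_ _ sK _] := KKQ _ KK_K.
    exact: sK (Ma _ KK_K) (Mb _ KK_K).
  + by move=> q Mq; have [_ _ _ KT] := KKQ _ KK0; exact: KT (Mq _ KK0).
(* By minimality M = M p, so r p = p for some r \in M ... *)
have QMp : Q (rtrans M p).
  split; first exact: closed_rtrans.
  - by exists (ufmul p p), p.
  - move=> _ _ [r1 Mr1 ->] [r2 Mr2 ->]; exists (ufmul (ufmul r1 p) r2).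
      by apply: (sM) => //; apply: (sM).
    by rewrite !ufmulA.
  - by move=> _ [r Mr ->]; apply/MT/sM.
have MpM u : rtrans M p u -> M u by move=> [r Mr ->]; apply: sM.
have [r Mr rp] := Mmin _ QMp MpM _ Mp.
(* ... and then M = {r \in M | r p = p}, which contains p. *)
pose Z r := M r /\ ufmul r p = p.
have QZ : Q Z.
  split; first by apply: closedI => //; apply: closed_left_unit.
  - by exists r.
  - by move=> a b [Ma ap] [Mb bp]; split; [apply: sM|rewrite ufmulA bp ap].
  - by move=> u [/MT].
have [_ pp] := Mmin _ QZ (fun u (Zu : Z u) => proj1 Zu) _ Mp.
by exists p => //; apply: MT.
Qed.

Definition minimal_left_ideal (T L : uf -> Prop) :=
  forall L', closed L' -> (exists p, L' p) -> left_ideal T L' ->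
    (forall p, L' p -> L p) -> forall p, L p -> L' p.

Lemma min_left_ideal T K : closed K -> (exists p, K p) ->
  left_ideal T K -> (forall p, K p -> T p) ->
  exists L, [/\ closed L, (exists p, L p), left_ideal T L, (forall p, L p -> K p) &
                minimal_left_ideal T L].
Proof.
move=> cK neK lK KT.
pose Q L := [/\ closed L, (exists p, L p), left_ideal T L & forall p, L p -> T p].
have [|L [cL neL _ _]|KK KKQ [K0 KK0] nemeet|L [[cL neL lL LT] LK Lmin]]
  := @closed_minimal _ Q K.
- by split.
- by split.
- split => //; first by apply: closed_bigmeet => L /KKQ [].
  + by move=> t l Tt Ml L KK_L; have [_ _ lL _] := KKQ _ KK_L; exact: lL (Ml _ KK_L).
  + by move=> q Mq; have [_ _ _ LT] := KKQ _ KK0; exact: LT (Mq _ KK0).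
exists L; split => // L' cL' neL' lL' L'L; apply: Lmin => //; split => //.
by move=> q /L'L /LT.
Qed.

Lemma min_left_ideal_gen T L x : closed T -> subsemigroup T -> left_ideal T L ->
  (forall p, L p -> T p) -> minimal_left_ideal T L ->
  L x -> forall p, L p -> exists2 t, T t & p = ufmul t x.
Proof.
move=> cT sT lL LT Lmin Lx.
apply: (Lmin (rtrans T x)); first exact: closed_rtrans.
- by exists (ufmul x x), x => //; apply: LT.
- by move=> t _ Tt [r Tr ->]; exists (ufmul t r); [apply: sT|rewrite ufmulA].
- by move=> _ [t Tt ->]; apply: lL.
Qed.

End UfSemigroup.

Section LocatedWords.
Variable A : finType.

(* A located letter is a position together with a letter of A or the
   variable (None); located words, under concatenation, form the semigroup on
   which we take ultrafilters. *)
Definition letter := (nat * option A)%type.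
Local Notation X := (seq letter).
Local Notation uf := (uf X).
Local Notation ufmul := (@ufmul X cat).

Definition block k (x : X) : Prop :=
  [&& x != [::], sorted ltn (map fst x) & all (fun c => k <= c.1) x].
Definition constant (x : X) : Prop := all (fun c => c.2 != None) x.
Definition has_var (x : X) : Prop := has (fun c => c.2 == None) x.

Definition fill (a : A) (c : letter) : letter := (c.1, Some (odflt a c.2)).

Definition bound (x : X) : nat := foldr (fun c m => maxn c.1.+1 m) 0 x.

Lemma bound_lt x c : c \in x -> c.1 < bound x.
Proof.
elim: x => //= d x IH; rewrite inE leq_max => /orP[/eqP->|/IH->]; last exact: orbT.
by rewrite ltnSn.
Qed.

Lemma block_cat k x y : block k x -> block (bound x) y -> block k (x ++ y).
Proof.
case/and3P => xn xs xk /and3P[yn ys yk]; apply/and3P; split.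
- by rewrite -size_eq0 size_cat addn_eq0 negb_and size_eq0 xn.
- rewrite map_cat sorted_pairwise ?pairwise_cat; last exact: ltn_trans.
  rewrite -!sorted_pairwise ?xs ?ys ?andbT; try exact: ltn_trans.
  apply/allrelP => _ _ /mapP[c cx ->] /mapP[d dy ->].
  exact: leq_trans (bound_lt cx) (allP yk d dy).
- rewrite all_cat xk /=; apply/allP => d dy.
  have [c cx] : exists c, c \in x by case: (x) xn => [|c s] //; exists c; rewrite mem_head.
  apply: leq_trans (allP xk c cx) _; apply: ltnW.
  exact: leq_trans (bound_lt cx) (allP yk d dy).
Qed.

Lemma block_mono j k x : j <= k -> block k x -> block j x.
Proof.
move=> jk /and3P[xn xs xk]; apply/and3P; split => //.
by apply/allP => c /(allP xk); apply: leq_trans.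
Qed.

Definition deep (p : uf) := forall k, ufmem p (block k).
Definition deep_const (p : uf) := deep p /\ ufmem p constant.

Lemma closed_deep : closed deep.
Proof. by move=> p p_cl k; apply: p_cl => r; apply. Qed.

Lemma closed_deep_const : closed deep_const.
Proof. by apply: closedI; [exact: closed_deep|move=> p p_cl; apply: p_cl => r]. Qed.

Lemma subsemigroup_deep : subsemigroup cat deep.
Proof.
move=> p q dp dq k; rewrite ufmemM; apply: ufmemS (dp k) => x xk.
by apply: ufmemS (dq (bound x)) => y; apply: block_cat.
Qed.

Lemma subsemigroup_deep_const : subsemigroup cat deep_const.
Proof.
move=> p q [dp cp] [dq cq]; split; first exact: subsemigroup_deep.
rewrite ufmemM; apply: ufmemS cp => x cx; apply: ufmemS cq => y cy.
by rewrite /lshift /constant all_cat; apply/andP.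
Qed.

Lemma has_var_mull u t : ufmem u has_var -> ufmem (ufmul u t) has_var.
Proof.
move=> uV; rewrite ufmemM; apply: ufmemS uV => x vx; apply: ufmemS (ufmemT t) => y _.
by rewrite /lshift /has_var has_cat; apply/orP; left.
Qed.

Lemma has_var_mulr u t : ufmem u has_var -> ufmem (ufmul t u) has_var.
Proof.
move=> uV; rewrite ufmemM; apply: ufmemS (ufmemT t) => x _; apply: ufmemS uV => y vy.
by rewrite /lshift /has_var has_cat; apply/orP; right.
Qed.

Lemma exists_deep (P : X -> Prop) :
  (forall k, exists x, block k x /\ P x) -> exists p, deep p /\ ufmem p P.
Proof.
move=> Pk.
have [p pG] : exists p : uf,
    forall B, (exists k, B = fun x => block k x /\ P x) -> ufmem p B.
  apply: uf_extend.
  - by exists (fun x => block 0 x /\ P x), 0.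
  - move=> _ _ [k1 ->] [k2 ->]; exists (fun x => block (maxn k1 k2) x /\ P x).
      by exists (maxn k1 k2).
    by move=> x [xk Px]; split; split => //; apply: block_mono xk;
      [exact: leq_maxl|exact: leq_maxr].
  - by move=> _ [k ->]; apply: Pk.
exists p; split; last by apply: ufmemS (pG _ (ex_intro _ 0 erefl)) => x [].
by move=> k; apply: ufmemS (pG _ (ex_intro _ k erefl)) => x [].
Qed.

Section Substitution.
Variables (a : A) (p : uf).
Let m B := ufmem p (fun x => B (map (fill a) x)).
Let mT : m (fun _ => True). Proof. exact: ufmemT. Qed.
Let mI B C : m B -> m C -> m (fun x => B x /\ C x). Proof. exact: ufmemI. Qed.
Let mS (B C : X -> Prop) : (forall x, B x -> C x) -> m B -> m C.
Proof. by move=> BC; apply: ufmemS => x; apply: BC. Qed.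
Let mU B : m B \/ m (fun x => ~ B x). Proof. exact: ufmemU. Qed.
Let m0 : ~ m (fun _ => False). Proof. exact: ufmem0. Qed.
Definition ufsubst := UF mT mI mS mU m0.
End Substitution.

Lemma ufmem_subst a p B : ufmem (ufsubst a p) B = ufmem p (fun x => B (map (fill a) x)).
Proof. by []. Qed.

Lemma ufsubst_mul a p q : ufsubst a (ufmul p q) = ufmul (ufsubst a p) (ufsubst a q).
Proof.
apply: uf_ext => B; rewrite ufmem_subst !ufmemM.
suff -> : ufshift cat q (fun x => B (map (fill a) x)) =
          (fun x => ufshift cat (ufsubst a q) B (map (fill a) x)) by [].
apply: funext => x; rewrite /ufshift ufmem_subst /lshift.
by congr (ufmem q); apply: funext => y; rewrite map_cat.
Qed.

Lemma ufsubst_deep a p : deep p -> deep_const (ufsubst a p).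
Proof.
move=> dp; split; last first.
  by rewrite ufmem_subst; apply: ufmemS (ufmemT p) => x _; rewrite /constant all_map; apply/allP.
move=> k; rewrite ufmem_subst; apply: ufmemS (dp k) => x /and3P[xn xs xk].
apply/and3P; split; rewrite ?all_map //; first by rewrite -size_eq0 size_map size_eq0.
by rewrite -map_comp (eq_map (g := fst)).
Qed.

Lemma ufsubst_const a p : ufmem p constant -> ufsubst a p = p.
Proof.
move=> cp; symmetry; apply: uf_sub => B pB; rewrite ufmem_subst.
apply: ufmemS (ufmemI pB cp) => x [Bx cx].
suff -> : map (fill a) x = x by [].
by rewrite -[RHS]map_id; apply/eq_in_map => -[n [b|]] /(allP cx).
Qed.
End LocatedWords.

Arguments constant {A} x.
Arguments has_var {A} x.
Arguments deep {A} p.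
Arguments deep_const {A} p.
Arguments closed_deep {A}.
Arguments closed_deep_const {A}.
Arguments subsemigroup_deep {A}.
Arguments subsemigroup_deep_const {A}.

Section HalesJewett.
Variables (A : finType) (a0 : A).
Local Notation X := (seq (letter A)).
Local Notation uf := (uf X).
Local Notation ufmul := (@ufmul X cat).
Let mulA : forall p q r : uf, ufmul (ufmul p q) r = ufmul p (ufmul q r) :=
  ufmulA (@catA _).

Lemma minimal_const_idempotent : exists p, [/\ deep_const p, ufmul p p = p &
  forall e, deep_const e -> ufmul e e = e -> ufmul e p = e -> ufmul p e = e -> e = p].
Proof.
have ne_const : exists p : uf, deep_const p.
  have [k|p cp] := @exists_deep A constant; last by exists p.
  by exists [:: (k, Some a0)]; rewrite /block /constant /= leqnn.
have [L [cL neL lL LT Lmin]] := min_left_ideal closed_deep_const ne_const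
  subsemigroup_deep_const (fun _ h => h).
have [p Lp pp] := ellis (@catA _) cL neL (fun a b La => lL _ _ (LT _ La)).
exists p; split => [|//|e ce ee ep pe]; first exact: LT.
have Le : L e by rewrite -ep; apply: lL.
have [t ct pte] := min_left_ideal_gen (@catA _) closed_deep_const
  subsemigroup_deep_const lL LT Lmin Le Lp.
have pe_p : ufmul p e = p by rewrite pte mulA ee.
by rewrite -pe pe_p.
Qed.

Lemma var_idempotent_below p : deep p -> ufmul p p = p ->
  exists q, [/\ deep q, ufmem q has_var, ufmul q q = q,
               ufmul q p = q & ufmul p q = q].
Proof.
move=> dp pp.
have ltrans : left_ideal cat deep (rtrans cat deep p).
  by move=> t _ dt [r dr ->]; exists (ufmul t r); [apply: subsemigroup_deep|rewrite mulA].
have trans_deep u : rtrans cat deep p u -> deep u.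
  by move=> [r dr ->]; apply: subsemigroup_deep.
have [L [cL neL lL LK Lmin]] := min_left_ideal (@closed_rtrans _ cat deep p closed_deep)
  (ex_intro _ (ufmul p p) (ex_intro2 _ _ p dp erefl)) ltrans trans_deep.
have Ldeep u : L u -> deep u by move/LK; apply: trans_deep.
have [r Lr rr] := ellis (@catA _) cL neL (fun a b La => lL _ _ (Ldeep _ La)).
have rp : ufmul r p = r by have [t _ ->] := LK _ Lr; rewrite mulA pp.
have [k|v [dv vV]] := @exists_deep A has_var.
  by exists [:: (k, None)]; rewrite /block /has_var /= leqnn.
exists (ufmul p r); split.
- exact: subsemigroup_deep (Ldeep _ Lr).
- have Lvq : L (ufmul v (ufmul p r)) by apply: (lL) => //; apply: (lL).
  have [t _ ->] := min_left_ideal_gen (@catA _) closed_deep subsemigroup_deep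
    lL Ldeep Lmin Lvq (lL _ _ dp Lr).
  by apply: has_var_mulr; apply: has_var_mull.
- by rewrite mulA -(mulA r p r) rp rr.
- by rewrite mulA rp.
- by rewrite -mulA pp.
Qed.

Theorem hales_jewett_idempotent : exists p, ufmul p p = p /\
  forall B k, ufmem p B ->
    exists x, [/\ block k x, has_var x & forall a, B (map (fill a) x)].
Proof.
have [p [[dp cp] pp pmin]] := minimal_const_idempotent.
have [q [dq qV qq qp pq]] := var_idempotent_below dp pp.
(* Substituting any letter maps q onto p, by minimality of p. *)
have subst_q a : ufsubst a q = p.
  apply: pmin; first exact: ufsubst_deep.
  - by rewrite -ufsubst_mul qq.
  - by rewrite -{1}(ufsubst_const a cp) -ufsubst_mul qp.
  - by rewrite -{1}(ufsubst_const a cp) -ufsubst_mul pq.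
exists p; split => // B k pB.
have : ufmem q (fun x => (block k x /\ has_var x) /\ forall a, B (map (fill a) x)).
  apply: ufmemI; first exact: ufmemI.
  by apply: ufmem_all => a; rewrite -ufmem_subst subst_q.
by move=> /ufmem_ex [x [[xk xV] xB]]; exists x.
Qed.
End HalesJewett.

Section BlockSequences.
Variable A : finType.
Local Notation X := (seq (letter A)).
Local Notation uf := (uf X).
Local Notation ufmul := (@ufmul X cat).

Definition comb (L : nat -> X) (ls : seq (nat * A)) : X :=
  flatten [seq map (fill c.2) (L c.1) | c <- ls].

Definition block_sequence (L : nat -> X) (b : nat -> nat) : Prop :=
  b 0 = 0 /\ forall n, [/\ block (b n) (L n), has_var (L n) &
                          all (fun c => c.1 < b n.+1) (L n)].

Lemma block_sequence_lt L b n : block_sequence L b -> b n < b n.+1.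
Proof.
move=> [_ /(_ n) [/and3P[ne _ ge] _ lt]].
case: (L n) ne ge lt => //= c x _ /andP[bc _] /andP[cb _].
exact: leq_ltn_trans bc cb.
Qed.

Lemma block_sequence_mono L b i j : block_sequence L b -> i <= j -> b i <= b j.
Proof.
move=> Lb /subnK <-; elim: (j - i) => //= d IH.
by rewrite addSn; apply: leq_trans IH (ltnW (block_sequence_lt _ Lb)).
Qed.

Section Recursion.
Variable p : uf.
Hypothesis pp : ufmul p p = p.
Hypothesis hj : forall B k, ufmem p B ->
  exists x, [/\ block k x, has_var x & forall a, B (map (fill a) x)].

Definition starset (B : X -> Prop) : X -> Prop :=
  fun x => B x /\ ufmem p (lshift cat x B).

Lemma starset_mem B : ufmem p B -> ufmem p (starset B).
Proof. by move=> pB; apply: ufmemI => //; rewrite -ufmemM pp. Qed.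

Lemma starset_lshift B x : starset B x -> ufmem p (lshift cat x (starset B)).
Proof.
move=> [Bx pxB]; apply: ufmemS (starset_mem pxB) => y [Bxy pxyB]; split => //.
by apply: ufmemS pxyB => z; rewrite /lshift catA.
Qed.

Lemma hj_block_ex D k : exists x, ufmem p D ->
  [/\ block k x, has_var x & forall a, D (map (fill a) x)].
Proof.
have [pD|npD] := pselect (ufmem p D); last by exists [::].
by have [x hx] := hj k pD; exists x.
Qed.

Definition hj_block D k : X := sval (cid (hj_block_ex D k)).

Lemma hj_blockP D k : ufmem p D ->
  [/\ block k (hj_block D k), has_var (hj_block D k) &
      forall a, D (map (fill a) (hj_block D k))].
Proof. exact: svalP (cid (hj_block_ex D k)). Qed.

Variable B0 : X -> Prop.

(* The recursion: stage n is a set D_n \in p with a position b_n; the block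
   L_n is chosen in D_n beyond b_n and D_{n+1} keeps the y \in D_n such that
   every substitution instance of L_n followed by y stays in D_n. *)
Fixpoint stage (n : nat) : (X -> Prop) * nat :=
  if n is n'.+1 then
    let: (D, k) := stage n' in let x := hj_block D k in
    (starset (fun y => D y /\ forall a, D (map (fill a) x ++ y)), bound x)
  else (starset B0, 0).

Definition Dst n := (stage n).1.
Definition bst n := (stage n).2.
Definition Lst n := hj_block (Dst n) (bst n).

Lemma stage_S n : stage n.+1 =
  (starset (fun y => Dst n y /\ forall a, Dst n (map (fill a) (Lst n) ++ y)),
   bound (Lst n)).
Proof. by rewrite /= /Lst /Dst /bst; case: (stage n). Qed.

Hypothesis pB0 : ufmem p B0.

Lemma Dst_mem n : ufmem p (Dst n) /\ exists C, Dst n = starset C.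
Proof.
elim: n => [|n [pD [C DC]]]; first by split; [apply: starset_mem|exists B0].
rewrite /Dst stage_S /=; split; last by eexists.
apply/starset_mem/ufmemI => //; apply: ufmem_all => a.
have [_ _ /(_ a)] := hj_blockP (bst n) pD; rewrite -/(Lst n) DC => /starset_lshift.
by rewrite -DC; apply: ufmemS.
Qed.

Lemma LstP n : [/\ block (bst n) (Lst n), has_var (Lst n) &
                   forall a, Dst n (map (fill a) (Lst n))].
Proof. exact: hj_blockP (bst n) (proj1 (Dst_mem n)). Qed.

Lemma Dst_S n y : Dst n.+1 y ->
  Dst n y /\ forall a, Dst n (map (fill a) (Lst n) ++ y).
Proof. by rewrite /Dst stage_S /= => -[]. Qed.

Lemma Dst_anti m n y : m <= n -> Dst n y -> Dst m y.
Proof. by move=> /subnK <-; elim: (n - m) y => //= d IH y /Dst_S [/IH]. Qed.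

Lemma comb_Dst ls n : ls != [::] -> sorted ltn (map fst ls) ->
  all (fun c => n <= c.1) ls -> Dst n (comb Lst ls).
Proof.
elim: ls n => // [[j a] rest] IH n _ /= srt /andP[nj ge_n].
rewrite /comb /= -/(comb Lst rest).
case: rest IH srt ge_n => [|c rest] IH srt ge_n.
  by rewrite cats0; apply: Dst_anti nj _; have [_ _] := LstP j.
have ge_j : all (fun d => j.+1 <= d.1) (c :: rest).
  have : pairwise ltn (j :: map fst (c :: rest)) by rewrite -(sorted_pairwise ltn_trans).
  by rewrite pairwise_cons all_map => /andP[].
have [_ /(_ a)] := Dst_S (IH j.+1 isT (path_sorted srt) ge_j).
exact: Dst_anti.
Qed.

Lemma block_sequence_Lst : block_sequence Lst bst.
Proof.
split=> // n; have [Ln Vn _] := LstP n; split => //.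
by rewrite /bst stage_S; apply/allP => c /bound_lt.
Qed.

End Recursion.

Theorem idempotent_block_sequence (p : uf) :
  ufmul p p = p ->
  (forall B k, ufmem p B ->
     exists x, [/\ block k x, has_var x & forall a, B (map (fill a) x)]) ->
  forall B0, ufmem p B0 ->
  exists L b, block_sequence L b /\
    forall ls, ls != [::] -> sorted ltn (map fst ls) -> B0 (comb L ls).
Proof.
move=> pp hj B0 pB0; exists (Lst hj B0), (bst hj B0).
split; first exact: block_sequence_Lst.
move=> ls ne srt; have ge0 : all (fun c => 0 <= c.1) ls by apply/allP.
by have [] := comb_Dst pp hj pB0 ne srt ge0.
Qed.

End BlockSequences.

Section Spans.
Variable A : finType.

Lemma extracted_head (t w : nat -> vword A) :
  extracted w t -> exists I, vspan t I (w 0).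
Proof.
move=> /(_ 0) [m [_ /(_ 0 (leqnn 0)) [_ w0]]].
by exists (fun n => (m 0 <= n) && (n < m 1)).
Qed.

Lemma cspan_head (w : nat -> vword A) a : cspan w predT (subst_c (w 0) a).
Proof. by exists [:: (0, a)]; rewrite /= cats0. Qed.

Lemma subst_c_subst_v (v : vword A) o a : subst_c (subst_v v o) a = subst_c v (odflt a o).
Proof. by rewrite /subst_c /subst_v -map_comp; apply: eq_map => -[b|]. Qed.

Variable s : nat -> vword A.

(* Located words read in s: the letter (n, o) stands for s_n(o); with a
   default letter a0 for the variable, they also give constant words. *)
Definition vword_of (x : seq (letter A)) : vword A :=
  flatten [seq subst_v (s c.1) c.2 | c <- x].
Definition cword_of (a0 : A) (x : seq (letter A)) : word A :=
  flatten [seq subst_c (s c.1) (odflt a0 c.2) | c <- x].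

Lemma cword_of_cat a0 x y : cword_of a0 (x ++ y) = cword_of a0 x ++ cword_of a0 y.
Proof. by rewrite /cword_of map_cat flatten_cat. Qed.

Lemma subst_vword_of a0 x a : subst_c (vword_of x) a = cword_of a0 (map (fill a) x).
Proof.
rewrite /subst_c /vword_of /cword_of map_flatten -!map_comp; congr flatten.
by apply: eq_map => c /=; rewrite -/(subst_c _ _) subst_c_subst_v.
Qed.

Lemma cword_of_comb a0 (L : nat -> seq (letter A)) ls :
  flatten [seq subst_c (vword_of (L c.1)) c.2 | c <- ls] = cword_of a0 (comb L ls).
Proof.
elim: ls => [|c ls IH] //=; rewrite /comb /= cword_of_cat -/(comb L ls) -IH.
by rewrite (subst_vword_of a0).
Qed.

Hypothesis hs : forall n, is_vword (s n).

Lemma vword_of_var x : has_var x -> is_vword (vword_of x).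
Proof.
move=> /hasP [c cx /eqP c2]; apply/flattenP.
exists (subst_v (s c.1) c.2); first exact: (map_f (fun c => subst_v (s c.1) c.2)).
rewrite c2 /subst_v (eq_map (g := id)) ?map_id; [exact: hs|by case].
Qed.

Lemma vspan_block o k j x : block (o + k) x -> has_var x ->
  all (fun c => c.1 < o + j) x ->
  vspan (fun n => s (o + n)) (fun n => (k <= n) && (n < j)) (vword_of x).
Proof.
case/and3P => ne srt ge hv lt.
have ge_o c : c \in x -> o <= c.1 by move=> /(allP ge); apply: leq_trans; apply: leq_addr.
exists [seq (c.1 - o, c.2) | c <- x]; split.
- by rewrite -size_eq0 size_map size_eq0.
- rewrite -map_comp (eq_map (g := subn^~ o \o fst)) // map_comp.
  apply: (@homo_sorted_in _ _ [pred n | o <= n]) srt; last first.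
    by apply/allP => _ /mapP[c cx ->]; rewrite inE ge_o.
  by move=> m n; rewrite !inE => om on mn; apply: ltn_sub2r (leq_ltn_trans om mn) mn.
- rewrite -map_comp all_map; apply/allP => c cx /=.
  by rewrite leq_subRL ?ge_o ?(allP ge) //= ltn_subLR ?ge_o ?(allP lt).
- by rewrite has_map.
- rewrite /vword_of -map_comp; congr flatten; apply/eq_in_map => c cx /=.
  by rewrite subnKC ?ge_o.
Qed.

Lemma extracted_blocks L b d : block_sequence L b ->
  extracted (fun n => vword_of (L (d + n))) (fun n => s (b d + n)).
Proof.
move=> Lb l; exists (fun i => b (d + i) - b d); split; first by rewrite addn0 subnn.
move=> i _; have [_ /(_ (d + i)) [Lblk Lvar Llt]] := Lb.
have bd_le n : b d <= b (d + n) by apply: block_sequence_mono Lb (leq_addr n d).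
have lt := block_sequence_lt (d + i) Lb.
split; first by rewrite addnS; apply: ltn_sub2r (leq_ltn_trans (bd_le i) lt) lt.
apply: vspan_block => //; first by rewrite subnKC.
by rewrite subnKC ?bd_le // addnS.
Qed.

Lemma subst_vspan_comb a0 (L : nat -> seq (letter A)) I u :
  vspan (fun n => vword_of (L n.+1)) I u ->
  exists ls, [/\ ls != [::], sorted ltn (0 :: map fst ls) &
                 subst_c u a0 = cword_of a0 (comb L ls)].
Proof.
move=> [ls [ne srt _ _ ->]].
exists [seq (c.1.+1, odflt a0 c.2) | c <- ls]; split.
- by rewrite -size_eq0 size_map size_eq0.
- rewrite -map_comp (eq_map (g := succn \o fst)) // map_comp.
  case: (map fst ls) srt => //= n ns srt.
  by apply: (homo_path (e := ltn)) srt => m m' /=.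
- rewrite -(cword_of_comb a0) -map_comp /subst_c map_flatten -map_comp.
  by congr flatten; apply: eq_map => c /=; rewrite -/(subst_c _ _) subst_c_subst_v.
Qed.

End Spans.

Theorem lemma2p9 (A : finType) (hA : 0 < #|A|) (E : word A -> Prop)
    (s : nat -> vword A) (hs : forall n, is_vword (s n)) (hlarge : large E s) :
  exists m : nat, 1 <= m /\
    exists w : vword A, vspan s (fun n => n < m) w /\
      exists t : nat -> vword A,
        (forall n, is_vword (t n)) /\
        extracted t (fun n => s (m + n)) /\
        large (fun z => E z /\
                 shiftset E (fun u => exists a : A, u = subst_c w a) z) t.
Proof.
have [a0 _] := card_gt0P hA.
have [p [pp hj]] := hales_jewett_idempotent a0.
(* The located words read into E cannot avoid p: otherwise their complement
   would contain all combinations of a block sequence, against largeness. *)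
have [pE|pnE] := ufmemU p (fun x => E (cword_of s a0 x)); last first.
  have [L [b [Lb combL]]] := idempotent_block_sequence pp hj pnE.
  have ext : extracted (fun n => vword_of s (L n)) s.
    by have := extracted_blocks s 0 Lb; rewrite (proj1 Lb).
  have [z [Ez [ls [ne srt _ zE]]]] := hlarge _ ext.
  by case: (combL ls ne srt); rewrite -(cword_of_comb _ a0) -zE.
have [L [b [Lb combL]]] := idempotent_block_sequence pp hj pE.
have [_ /(_ 0) [L0 V0 lt0]] := Lb.
exists (b 1); split; first by have := block_sequence_lt 0 Lb; rewrite (proj1 Lb).
exists (vword_of s (L 0)); split.
  by rewrite (proj1 Lb) in L0; exact: (vspan_block s (o := 0) (k := 0) L0 V0 lt0).
exists (fun n => vword_of s (L n.+1)); split.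
  by move=> n; have [_ V _] := proj2 Lb n.+1; apply: vword_of_var.
split; first exact (extracted_blocks s 1 Lb).
(* For w extracted from t, substitute a0 in its first term: z = w_0(a0) is
   read from a combination of blocks beyond L_0, so z \in E, and w(a) z is
   read from a combination starting with L_0, so w(a) z \in E. *)
move=> w /extracted_head [I w0]; exists (subst_c (w 0) a0); split; last exact: cspan_head.
have [ls [ne srt ->]] := subst_vspan_comb a0 w0.
split; first exact: combL ls ne (path_sorted srt).
move=> _ [a ->]; rewrite (subst_vword_of s a0) -cword_of_cat.
exact: combL ((0, a) :: ls) isT srt.
Qed.
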